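(* Let $M:\mathbb{T}\to(0,\infty)$ be a positive scalar function on the unit circle $\mathbb{T}$, let $m\in\mathbb{N}$, and fix $\varepsilon\ge0$. For real coefficients $(p_0,\dots,p_m)$ and $(q_0,\dots,q_m)$ let $P(z)=\sum_{k=-m}^{m}p_kz^{-k}$ and $Q(z)=\sum_{k=-m}^{m}q_kz^{-k}$ with $p_{-k}=p_k$, $q_{-k}=q_k$. Then the set of coefficient vectors $(p_0,\dots,p_m,q_0,\dots,q_m)\in\mathbb{R}^{2m+2}$ satisfying (i) $P(z)>0$ and $Q(z)>0$ for all $z\in\mathbb{T}$, (ii) $q_0=1$, and (iii) $\max_{z\in\mathbb{T}}\big|P(z)/Q(z)-M(z)\big|\le\varepsilon$, is convex. *)

From HB Require Import structures.
From mathcomp Require Import all_boot all_order all_algebra.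
From mathcomp Require Import complex.
From mathcomp Require Import reals.
Set Implicit Arguments. Unset Strict Implicit. Unset Printing Implicit Defensive.
Import Order.TTheory GRing.Theory Num.Theory.
Local Open Scope ring_scope.

(* Laurent polynomial P(z) = \sum_{k=-m}^{m} p_{|k|} z^{-k}, where the
   coefficient vector p = (p_0, ..., p_m) is real and p_{-k} := p_k. *)
Definition symLaurent (R : realType) (m : nat) (p : 'rV[R]_m.+1) (z : R[i]) : R[i] :=
  \sum_(i < (m.*2).+1)
    (p ord0 (inord `|(i%:Z - m%:Z)%R|%N))%:C%C * z ^ (- (i%:Z - m%:Z)%R).

Definition admissible (R : realType) (m : nat) (M : R[i] -> R) (eps : R)
    (p q : 'rV[R]_m.+1) : Prop :=
  (forall z : R[i], `|z| = 1 -> 0 < symLaurent p z /\ 0 < symLaurent q z)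
  /\ q ord0 ord0 = 1
  /\ (forall z : R[i], `|z| = 1 ->
        `| symLaurent p z / symLaurent q z - (M z)%:C%C | <= eps%:C%C).

From HB Require Import structures.
From mathcomp Require Import all_boot all_order all_algebra.
From mathcomp Require Import complex reals.
Import Order.TTheory GRing.Theory Num.Theory.
Local Open Scope ring_scope.

(* For [Q > 0] the constraint [|P/Q - M| <= eps] is equivalent to
   [|P - M Q| <= eps Q], which is preserved by nonnegative combinations of
   pairs (P, Q).  As P and Q depend linearly on the coefficients, a convex
   combination of admissible vectors yields the same convex combination of
   the pairs (P, Q), which stays positive on the circle; q_0 = 1 is an affine
   constraint. *)

Lemma ler_dist_div (C : numFieldType) (P Q c e : C) : 0 < Q ->
  (`|P / Q - c| <= e) = (`|P - c * Q| <= e * Q).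
Proof.
move=> Q_gt0; have -> : P - c * Q = (P / Q - c) * Q by rewrite mulrBl divfK ?gt_eqF.
by rewrite normrM (gtr0_norm Q_gt0) ler_pM2r.
Qed.

Lemma ler_normB_comb (C : numDomainType) (a b P1 Q1 P2 Q2 c e : C) :
  0 <= a -> 0 <= b ->
  `|P1 - c * Q1| <= e * Q1 -> `|P2 - c * Q2| <= e * Q2 ->
  `|(a * P1 + b * P2) - c * (a * Q1 + b * Q2)| <= e * (a * Q1 + b * Q2).
Proof.
move=> a_ge0 b_ge0 le1 le2.
have -> : a * P1 + b * P2 - c * (a * Q1 + b * Q2)
          = a * (P1 - c * Q1) + b * (P2 - c * Q2).
  by rewrite !mulrBr mulrDr (mulrCA c a) (mulrCA c b) addrACA opprD.
rewrite (mulrDr e) (mulrCA e a) (mulrCA e b); apply: le_trans (ler_normD _ _) _.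
by rewrite !normrM (ger0_norm a_ge0) (ger0_norm b_ge0) lerD // ler_wpM2l.
Qed.

Lemma convex_comb_gt0 (C : numDomainType) (t x y : C) :
  0 <= t <= 1 -> 0 < x -> 0 < y -> 0 < t * x + (1 - t) * y.
Proof.
case/andP=> t_ge0 t_le1 x_gt0 y_gt0.
have [t_eq1 | t_lt1] := eqVneq t 1.
  by rewrite t_eq1 subrr mul0r addr0 mul1r.
have t'_gt0 : 0 < 1 - t by rewrite subr_gt0 lt_neqAle t_lt1 t_le1.
by rewrite ltr_wpDl ?mulr_ge0 ?mulr_gt0 // ltW.
Qed.

Lemma symLaurentD (R : realType) (m : nat) (p q : 'rV[R]_m.+1) (z : R[i]) :
  symLaurent (p + q) z = symLaurent p z + symLaurent q z.
Proof.
by rewrite /symLaurent -big_split; apply: eq_bigr => i _; rewrite mxE rmorphD mulrDl.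
Qed.

Lemma symLaurentZ (R : realType) (m : nat) (a : R) (p : 'rV[R]_m.+1) (z : R[i]) :
  symLaurent (a *: p) z = a%:C%C * symLaurent p z.
Proof.
by rewrite /symLaurent mulr_sumr; apply: eq_bigr => i _; rewrite mxE rmorphM mulrA.
Qed.

Theorem lemma4p5 (R : realType) (M : R[i] -> R)
  (hM : forall z : R[i], `|z| = 1 -> 0 < M z)
  (m : nat) (eps : R) (heps : 0 <= eps) :
  forall (p1 q1 p2 q2 : 'rV[R]_m.+1) (t : R),
    admissible M eps p1 q1 -> admissible M eps p2 q2 ->
    0 <= t <= 1 ->
    admissible M eps (t *: p1 + (1 - t) *: p2) (t *: q1 + (1 - t) *: q2).
Proof.
move=> p1 q1 p2 q2 t [pos1 [q1_0 dist1]] [pos2 [q2_0 dist2]] t_01.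
have tC_01 : (0 : R[i]) <= t%:C%C <= 1 by rewrite -[0]/(0%:C%C) -[1]/(1%:C%C) !lecR.
have symLaurent_comb (p q : 'rV[R]_m.+1) z : symLaurent (t *: p + (1 - t) *: q) z
    = t%:C%C * symLaurent p z + (1 - t%:C%C) * symLaurent q z.
  by rewrite symLaurentD !symLaurentZ rmorphB rmorph1.
split; [|split].
- move=> z z1; have [P1_gt0 Q1_gt0] := pos1 z z1; have [P2_gt0 Q2_gt0] := pos2 z z1.
  by rewrite !symLaurent_comb; split; apply: convex_comb_gt0.
- by rewrite !mxE q1_0 q2_0 !mulr1 addrC subrK.
- move=> z z1; have [_ Q1_gt0] := pos1 z z1; have [_ Q2_gt0] := pos2 z z1.
  have /andP[tC_ge0 tC_le1] := tC_01.
  rewrite !symLaurent_comb ler_dist_div; last exact: convex_comb_gt0.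
  apply: ler_normB_comb => //.
  + by rewrite subr_ge0.
  + by rewrite -ler_dist_div // dist1.
  + by rewrite -ler_dist_div // dist2.
Qed.
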